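(* Let $\mathcal{H}=(V,E)$ be a hypergraph with $|V|=n$ and let $\sigma:[n]\to V$ be a bijection. (a) Let $d=|V|-\operatorname{alt}(\mathcal{H},\sigma)-1$ and suppose $\operatorname{alt}(\mathcal{H},\sigma)\neq|V|$. Then there is a map $\varphi:V\to S^d$ (a multiset $Z\subset S^d$ of size $|V|$ identified with $V$) such that for every $x\in S^d$, there is an edge $e\in E$ with $\varphi(e)\subseteq H(x)$ or $\varphi(e)\subseteq H(-x)$. Moreover, if $d\geq1$, $\varphi$ can be chosen injective. (b) Let $d=|V|-\operatorname{salt}(\mathcal{H},\sigma)-1$ and suppose $\operatorname{salt}(\mathcal{H},\sigma)\neq|V|$. Then there is a map $\varphi:V\to S^d$ (a multiset $Z\subset S^d$ of size $|V|$ identified with $V$) such that for every $x\in S^d$, there is an edge $e\in E$ with $\varphi(e)\subseteq H(x)$. Moreover, if $d\geq1$, $\varphi$ can be chosen injective.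
   Context: A hypergraph $\mathcal{H}=(V,E)$ consists of a finite nonempty vertex set $V$ and a family $E$ of distinct nonempty subsets of $V$ (edges). For $U\subseteq V$, $\mathcal{H}[U]$ is the induced subhypergraph with vertex set $U$ and edge set $\{e\in E:e\subseteq U\}$. $[n]=\{1,\dots,n\}$. $S^d\subset\mathbb{R}^{d+1}$ is the unit sphere and $H(x)=\{y\in S^d:\langle x,y\rangle>0\}$ is the open hemisphere centered at $x$. For $X=(x_1,\dots,x_n)\in\{+,-,0\}^n$, an alternating subsequence is a subsequence of nonzero terms in which consecutive terms have different signs; $\operatorname{alt}(X)$ is the maximum length of such a subsequence ($\operatorname{alt}(0,\dots,0)=0$). $X^+=\{j:x_j=+\}$, $X^-=\{j:x_j=-\}$. $$\operatorname{alt}(\mathcal{H},\sigma)=\max\{\operatorname{alt}(X):X\in\{+,-,0\}^n,\ \max(|E(\mathcal{H}[\sigma(X^+)])|,|E(\mathcal{H}[\sigma(X^-)])|)=0\},$$ $$\operatorname{salt}(\mathcal{H},\sigma)=\max\{\operatorname{alt}(X):X\in\{+,-,0\}^n,\ \min(|E(\mathcal{H}[\sigma(X^+)])|,|E(\mathcal{H}[\sigma(X^-)])|)=0\}.$$ *)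

From HB Require Import structures.
From mathcomp Require Import all_boot all_order all_algebra.
From mathcomp Require Import reals.
Set Implicit Arguments. Unset Strict Implicit. Unset Printing Implicit Defensive.
Import Order.TTheory GRing.Theory Num.Theory.

(* Sign vectors X in {+,-,0}^n : Some true = +, Some false = -, None = 0. *)
Definition signvec (n : nat) := {ffun 'I_n -> option bool}.

Definition nonzero_terms n (X : signvec n) : seq bool :=
  pmap (fun i => X i) (enum 'I_n).

Definition alternating (t : seq bool) : bool := sorted (fun a b => a != b) t.

Definition altX n (X : signvec n) : nat :=
  \max_(m : n.-tuple bool | alternating (mask m (nonzero_terms X)))
     size (mask m (nonzero_terms X)).

Definition Xplus n (X : signvec n) : {set 'I_n} := [set j | X j == Some true].
Definition Xminus n (X : signvec n) : {set 'I_n} := [set j | X j == Some false].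

Definition n_induced_edges (V : finType) (E : {set {set V}}) (U : {set V}) : nat :=
  #|[set e in E | e \subset U]|.

Definition alt_hyp (V : finType) (E : {set {set V}}) n (sigma : 'I_n -> V) : nat :=
  \max_(X : signvec n |
        maxn (n_induced_edges E (sigma @: Xplus X))
             (n_induced_edges E (sigma @: Xminus X)) == 0) altX X.

Definition salt_hyp (V : finType) (E : {set {set V}}) n (sigma : 'I_n -> V) : nat :=
  \max_(X : signvec n |
        minn (n_induced_edges E (sigma @: Xplus X))
             (n_induced_edges E (sigma @: Xminus X)) == 0) altX X.

Local Open Scope ring_scope.

Definition dotp (R : realType) k (x y : 'rV[R]_k) : R := \sum_(i < k) x 0 i * y 0 i.

Definition on_sphere (R : realType) k (x : 'rV[R]_k) : Prop := dotp x x = 1.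

Definition in_hemisphere (R : realType) k (x y : 'rV[R]_k) : Prop := 0 < dotp x y.

(* Vertex sigma(i) goes to the normalisation of w_i = (-1)^i (1, i, ..., i^d), a
   point of the signed moment curve.  For x in S^d, <x, w_i> = (-1)^i p(i) where p
   is the polynomial of degree at most d with coefficient vector x.  If p has no
   real root, the signs of (-1)^i p(i), i < n, alternate all along; dividing out a
   real root a negates the signs left of a and deletes at most one term, which
   costs at most one alternation.  So the sign vector X of x has alt(X) >= n - d,
   which exceeds alt(H, sigma) (resp. salt(H, sigma)): hence X^+ or X^- (resp.
   both) spans an edge, i.e. some edge lies in H(x) or H(-x) (resp. in H(x)). *)

From HB Require Import structures.
From mathcomp Require Import all_boot all_order all_algebra.
From mathcomp Require Import reals zify.
Import Order.TTheory GRing.Theory Num.Theory.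
From mathcomp Require Import polyrcf.
Set Implicit Arguments. Unset Strict Implicit. Unset Printing Implicit Defensive.

Lemma subseq_behead (T : eqType) (u s : seq T) :
  subseq u s -> subseq (behead u) (behead s).
Proof.
case: s => [/eqP -> // | y s]; case: u => [|x u] /=; first by rewrite sub0seq.
by case: eqP => // _; apply: cons_subseq.
Qed.

Lemma subseq_cat_split (T : eqType) (t a b : seq T) :
  subseq t (a ++ b) -> exists t1 t2, [/\ t = t1 ++ t2, subseq t1 a & subseq t2 b].
Proof.
move=> /subseqP [m sm ->].
rewrite -(cat_take_drop (size a) m) mask_cat; last first.
  by rewrite size_takel // sm size_cat leq_addr.
by exists (mask (take (size a) m) a), (mask (drop (size a) m) b); rewrite !mask_subseq.
Qed.

Lemma pmap_map (aT bT cT : Type) (f : bT -> option cT) (g : aT -> bT) s :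
  pmap f (map g s) = pmap (f \o g) s.
Proof. by elim: s => //= x s ->. Qed.

Lemma alternating_flip (t u : seq bool) :
  alternating (t ++ u) -> alternating (map negb t ++ behead u).
Proof.
rewrite /alternating; case: t => [|x t] /=; first by case: u => //= y u /path_sorted.
have negb_neq a b : (~~ a != ~~ b) = (a != b) by case: a; case: b.
rewrite !cat_path path_map (eq_path negb_neq) last_map => /andP [-> /=].
case: (last x t) u => [] [|y [|z u]] //=; by case: y; case: z.
Qed.

Lemma alternating_subseq_flip (a b b' t : seq bool) :
  subseq (behead b) b' -> subseq t (a ++ b) -> alternating t ->
  exists t', [/\ subseq t' (map negb a ++ b'), alternating t' & (size t <= (size t').+1)%N].
Proof.
move=> sbb' /subseq_cat_split [t1 [u [-> st1 su]]] /alternating_flip alt.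
exists (map negb t1 ++ behead u); split => //.
  by rewrite cat_subseq ?map_subseq // (subseq_trans (subseq_behead su)).
by rewrite !size_cat size_map size_behead -addnS leq_add2l leqSpred.
Qed.

Lemma alternating_odd (b : bool) m k : alternating [seq odd i (+) b | i <- iota m k].
Proof.
elim: k m => [|k IH] m //; rewrite /alternating /= in IH *.
case: k IH => //= k IH; move: (IH m.+1) => /= ->.
by rewrite andbT; case: (odd m); case: (b).
Qed.

Lemma size_nonzero_terms n (X : signvec n) : (size (nonzero_terms X) <= n)%N.
Proof. by rewrite size_pmap (leq_trans (count_size _ _)) ?size_enum_ord. Qed.

Lemma altX_le n (X : signvec n) : (altX X <= n)%N.
Proof.
apply/bigmax_leqP => m _.
exact: leq_trans (size_subseq (mask_subseq _ _)) (size_nonzero_terms X).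
Qed.

Lemma altX_ge n (X : signvec n) t :
  subseq t (nonzero_terms X) -> alternating t -> (size t <= altX X)%N.
Proof.
move=> /subseqP [m sm ->] alt.
have sz : size (m ++ nseq (n - size m) false) == n.
  by rewrite size_cat size_nseq subnKC // sm size_nonzero_terms.
have pad : mask m (nonzero_terms X) = mask (Tuple sz) (nonzero_terms X).
  by rewrite /= -{2}[nonzero_terms X]cats0 mask_cat // mask0 cats0.
by rewrite pad in alt *; apply: leq_bigmax_cond.
Qed.

Local Open Scope ring_scope.

Definition sign_of {R : numDomainType} (x : R) : option bool :=
  if x == 0 then None else Some (0 < x).

Section Signs.
Variable R : realDomainType.
Implicit Types (x c : R) (v f : nat -> R) (s : seq nat).

Lemma sign_of_mul_neg x c : c < 0 -> sign_of (x * c) = omap negb (sign_of x).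
Proof.
move=> c_lt0; rewrite /sign_of mulf_eq0 (negbTE (ltr0_neq0 c_lt0)) orbF.
have [//|x_neq0] /= := eqVneq x 0.
by rewrite nmulr_lgt0 // ltNge le_eqVlt eq_sym (negbTE x_neq0).
Qed.

Lemma sign_of_mul_pos x c : 0 < c -> sign_of (x * c) = sign_of x.
Proof.
move=> c_gt0; rewrite /sign_of mulf_eq0 (negbTE (lt0r_neq0 c_gt0)) orbF.
by rewrite pmulr_lgt0.
Qed.

Lemma sign_of_signr_mul x c (i : nat) : 0 < c * x ->
  sign_of ((-1) ^+ i * x) = Some (odd i (+) (0 < c)).
Proof.
move=> cx_gt0; rewrite /sign_of -signr_odd mulr_sign.
have [c_lt0|c_gt0|c0] := ltrgtP c 0; last by rewrite c0 mul0r ltxx in cx_gt0.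
- rewrite nmulr_rgt0 // in cx_gt0.
  by case: odd; rewrite ?oppr_eq0 (lt_eqF cx_gt0) ?oppr_gt0 ?cx_gt0 ?(lt_gtF cx_gt0).
- rewrite pmulr_rgt0 // in cx_gt0.
  by case: odd; rewrite ?oppr_eq0 (gt_eqF cx_gt0) ?oppr_gt0 ?cx_gt0 ?(lt_gtF cx_gt0).
Qed.

Lemma sign_of_eq_pos x : (sign_of x == Some true) = (0 < x).
Proof.
by rewrite /sign_of; have [->|_] := eqVneq x 0; [rewrite ltxx | case: (0 < x)].
Qed.

Lemma sign_of_eq_neg x : (sign_of x == Some false) = (x < 0).
Proof.
rewrite /sign_of; have [->|x_neq0] := eqVneq x 0; first by rewrite ltxx.
by rewrite [RHS]ltNge le_eqVlt [0 == x]eq_sym (negbTE x_neq0); case: (0 < x).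
Qed.

Lemma signs_mul_neg v f s : {in s, forall i, f i < 0} ->
  pmap sign_of [seq v i * f i | i <- s] = map negb (pmap sign_of (map v s)).
Proof.
elim: s => //= i s IH f_lt0.
rewrite sign_of_mul_neg ?f_lt0 ?mem_head // IH; first by case: sign_of.
by move=> j js; rewrite f_lt0 // in_cons js orbT.
Qed.

Lemma signs_mul_pos v f s : {in s, forall i, 0 < f i} ->
  pmap sign_of [seq v i * f i | i <- s] = pmap sign_of (map v s).
Proof.
elim: s => //= i s IH f_gt0.
rewrite sign_of_mul_pos ?f_gt0 ?mem_head // IH //.
by move=> j js; rewrite f_gt0 // in_cons js orbT.
Qed.

Lemma signs_behead_subseq v f s : {in behead s, forall i, 0 < f i} ->
  subseq (behead (pmap sign_of (map v s))) (pmap sign_of [seq v i * f i | i <- s]).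
Proof.
case: s => //= i s f_gt0; rewrite signs_mul_pos //.
have behead_sub (t : seq bool) : subseq (behead t) t by rewrite -drop1 drop_subseq.
case: (sign_of (v i)) (sign_of (v i * f i)) => [b|] [c|] //=.
- exact: subseq_cons.
- exact: subseq_trans (behead_sub _) (subseq_cons _ _).
Qed.

Lemma signs_const_sign v c s : {in s, forall i, 0 < c * v i} ->
  pmap sign_of [seq (-1) ^+ i * v i | i <- s] = [seq odd i (+) (0 < c) | i <- s].
Proof.
elim: s => //= i s IH cv_gt0.
rewrite (sign_of_signr_mul _ (cv_gt0 i (mem_head _ _))) /= IH //.
by move=> j js; rewrite cv_gt0 // in_cons js orbT.
Qed.

Lemma nat_threshold (a : R) n :
  exists2 k, (k <= n)%N & forall i, (i < n)%N -> (i < k)%N = (i%:R < a).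
Proof.
pose k := find (fun i : nat => a <= i%:R) (iota 0 n).
have le_kn : (k <= n)%N by rewrite -(size_iota 0 n) find_size.
exists k => // i lt_in; apply/idP/idP => [lt_ik | lt_ia].
  by have := before_find 0%N lt_ik; rewrite nth_iota // add0n ltNge => ->.
rewrite ltnNge; apply/negP => le_ki.
have lt_kn : (k < n)%N := leq_ltn_trans le_ki lt_in.
have has_k : has (fun i : nat => a <= i%:R) (iota 0 n) by rewrite has_find size_iota.
have := nth_find 0%N has_k; rewrite -/k nth_iota // add0n => le_ak.
by move: lt_ia; rewrite ltNge (le_trans le_ak) // ler_nat.
Qed.

End Signs.

Definition sign_pattern (R : numDomainType) (p : {poly R}) n : seq bool :=
  pmap sign_of [seq (-1) ^+ i * p.[i%:R] | i <- iota 0 n].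

Lemma sign_pattern_mul_XsubC (R : realDomainType) (q : {poly R}) a n t :
  subseq t (sign_pattern q n) -> alternating t ->
  exists t', [/\ subseq t' (sign_pattern (q * ('X - a%:P)) n), alternating t'
               & (size t <= (size t').+1)%N].
Proof.
move=> sub_t alt_t; have [k le_kn below_a] := nat_threshold a n.
pose vq i := (-1) ^+ i * q.[i%:R].
have split_iota : iota 0 n = iota 0 k ++ iota k (n - k) by rewrite -iotaD subnKC.
rewrite /sign_pattern split_iota map_cat pmap_cat in sub_t.
have right_of_a : {in behead (iota k (n - k)), forall i, 0 < i%:R - a}.
  move=> i; rewrite (_ : behead _ = iota k.+1 (n - k).-1); last by case: (n - k)%N.
  rewrite mem_iota subr_gt0 => /andP [lt_ki lt_i].
  have lt_kn : (k < n)%N by lia.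
  have := below_a k lt_kn; rewrite ltnn => /esym/negbT; rewrite -leNgt => le_ak.
  by rewrite (le_lt_trans le_ak) // ltr_nat.
have [t' [sub_t' alt_t' size_t']] :=
  alternating_subseq_flip (signs_behead_subseq vq right_of_a) sub_t alt_t.
exists t'; split => //; rewrite /sign_pattern.
under eq_map do rewrite hornerM hornerXsubC mulrA.
rewrite split_iota map_cat pmap_cat (@signs_mul_neg _ vq (fun i => i%:R - a)) // => i.
rewrite mem_iota add0n subr_lt0 => /andP [_ lt_ik].
by rewrite -below_a // (leq_trans lt_ik).
Qed.

Lemma sign_pattern_alternating (R : rcfType) (p : {poly R}) n : p != 0 ->
  exists t, [/\ subseq t (sign_pattern p n), alternating t & (n <= size t + (size p).-1)%N].
Proof.
have [k] := ubnP (size p); elim: k p => // k IH p lt_pk p_neq0.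
have [/existsP [j sign_change] | /existsPn same_sign] :=
  boolP [exists j : 'I_n, p.[0] * p.[j%:R] <= 0]; last first.
  exists [seq odd i (+) (0 < p.[0]) | i <- iota 0 n]; split.
  - rewrite /sign_pattern (@signs_const_sign _ (fun i => p.[i%:R]) p.[0]) // => i.
    rewrite mem_iota add0n => /andP [_ lt_in].
    by have := same_sign (Ordinal lt_in); rewrite ltNge.
  - exact: alternating_odd.
  - by rewrite size_map size_iota leq_addr.
have [a _ /factor_theorem [q def_p]] := poly_ivt (ler0n R j) sign_change.
have q_neq0 : q != 0 by apply: contraNneq p_neq0 => q0; rewrite def_p q0 mul0r.
have size_p : size p = (size q).+1.
  by rewrite def_p size_mul ?polyXsubC_eq0 // size_XsubC addn2.
have lt_qk : (size q < k)%N by rewrite -ltnS -size_p.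
have [t [sub_t alt_t size_t]] := IH q lt_qk q_neq0.
have [t' [sub_t' alt_t' size_t']] := sign_pattern_mul_XsubC a sub_t alt_t.
exists t'; rewrite size_p def_p; split => //=.
rewrite -size_poly_gt0 in q_neq0; move: size_t size_t'.
by case: (size q) q_neq0 => //= m _; lia.
Qed.

Section Sphere.
Variable R : realType.
Implicit Types (D : nat).

Lemma dotpZr D (x u : 'rV[R]_D) c : dotp x (c *: u) = c * dotp x u.
Proof. by rewrite /dotp mulr_sumr; apply: eq_bigr => k _; rewrite mxE mulrCA. Qed.

Lemma dotpZl D (x u : 'rV[R]_D) c : dotp (c *: x) u = c * dotp x u.
Proof. by rewrite /dotp mulr_sumr; apply: eq_bigr => k _; rewrite mxE mulrA. Qed.

Lemma dotpNl D (x u : 'rV[R]_D) : dotp (- x) u = - dotp x u.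
Proof. by rewrite -scaleN1r dotpZl mulN1r. Qed.

Lemma dotp_gt0 D (u : 'rV[R]_D) : u != 0 -> 0 < dotp u u.
Proof.
move=> u_neq0; rewrite lt_def sumr_ge0 ?andbT => [|k _]; last by rewrite -expr2 sqr_ge0.
apply: contra u_neq0; rewrite psumr_eq0 => [/allP u0|k _]; last by rewrite -expr2 sqr_ge0.
by apply/eqP/rowP => k; have := u0 k (mem_index_enum k); rewrite mulf_eq0 orbb mxE => /eqP.
Qed.

Lemma on_sphere_neq0 D (x : 'rV[R]_D) : on_sphere x -> x != 0.
Proof.
rewrite /on_sphere => x1; apply/eqP => x0; move: x1.
by rewrite x0 /dotp big1 => [/esym/eqP|k _]; rewrite ?oner_eq0 // mxE mul0r.
Qed.

Definition normalize D (u : 'rV[R]_D) : 'rV[R]_D := (Num.sqrt (dotp u u))^-1 *: u.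

Lemma on_sphere_normalize D (u : 'rV[R]_D) : u != 0 -> on_sphere (normalize u).
Proof.
move=> /dotp_gt0 uu_gt0; rewrite /on_sphere /normalize dotpZl dotpZr mulrA -expr2.
by rewrite exprVn sqr_sqrtr ?ltW // mulVf // gt_eqF.
Qed.

Lemma dotp_normalize_gt0 D (x u : 'rV[R]_D) : u != 0 ->
  (0 < dotp x (normalize u)) = (0 < dotp x u).
Proof. by move=> /dotp_gt0 uu_gt0; rewrite dotpZr pmulr_rgt0 // invr_gt0 sqrtr_gt0. Qed.

Definition moment_vector D (i : nat) : 'rV[R]_D := \row_(k < D) ((-1) ^+ i * i%:R ^+ k).

Lemma moment_vector_neq0 D i : moment_vector D.+1 i != 0.
Proof. by apply/eqP => /rowP /(_ ord0) /eqP; rewrite !mxE expr0 mulr1 signr_eq0. Qed.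

Lemma dotp_moment_vector D (x : 'rV[R]_D) i :
  dotp x (moment_vector D i) = (-1) ^+ i * (rVpoly x).[i%:R].
Proof.
rewrite (horner_coef_wide _ (size_poly _ _)) /dotp mulr_sumr.
by apply: eq_bigr => k _; rewrite coef_rVpoly_ord mxE mulrCA.
Qed.

Lemma normalize_moment_vector_inj D : (1 < D)%N ->
  injective (fun i : nat => normalize (moment_vector D i)).
Proof.
move=> D_gt1 i j /rowP eq_ij; have := eq_ij (Ordinal D_gt1).
have := eq_ij (Ordinal (ltn_trans (ltnSn 0) D_gt1)); rewrite /normalize !mxE /=.
set ci := (Num.sqrt _)^-1; set cj := (Num.sqrt _)^-1.
rewrite !expr0 !expr1 !mulr1 !mulrA => -> /mulfI eq_nat; apply/eqP.
rewrite -(eqr_nat R) eq_nat // mulf_neq0 ?signr_eq0 // invr_eq0 gt_eqF //.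
by rewrite sqrtr_gt0 dotp_gt0 // -(prednK (ltnW D_gt1)) moment_vector_neq0.
Qed.

End Sphere.

Arguments moment_vector {R} D i.

Definition moment_signs (R : realType) n D (x : 'rV[R]_D) : signvec n :=
  [ffun i : 'I_n => sign_of (dotp x (moment_vector D i))].

Lemma altX_moment_signs (R : realType) n D (x : 'rV[R]_D.+1) : x != 0 ->
  (n - D <= altX (moment_signs n x))%N.
Proof.
move=> x_neq0; have p_neq0 : rVpoly x != 0 by rewrite raddf_eq0 //; apply: can_inj rVpolyK.
have [t [sub_t alt_t size_t]] := sign_pattern_alternating n p_neq0.
have signsE : nonzero_terms (moment_signs n x) = sign_pattern (rVpoly x) n.
  rewrite /nonzero_terms /sign_pattern -val_enum_ord -map_comp [RHS]pmap_map.
  by apply: eq_pmap => i /=; rewrite ffunE dotp_moment_vector.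
have size_x : (size (rVpoly x) <= D.+1)%N := size_poly _ _.
rewrite -signsE in sub_t; have := altX_ge sub_t alt_t.
by move: size_t size_x; case: (size (rVpoly x)) => [|m] /=; lia.
Qed.

Lemma induced_edge_exists (V : finType) (E : {set {set V}}) (U : {set V}) :
  n_induced_edges E U != 0%N -> exists2 e, e \in E & e \subset U.
Proof. by rewrite cards_eq0 => /set0Pn [e]; rewrite inE => /andP [eE sub_e]; exists e. Qed.

Lemma bigmax_altX_le n (P : pred (signvec n)) : (\max_(X | P X) altX X <= n)%N.
Proof. by apply/bigmax_leqP => X _; apply: altX_le. Qed.

Lemma moment_signs_excluded (R : realType) n D (P : pred (signvec n)) (x : 'rV[R]_D.+1) :
  x != 0 -> (\max_(X | P X) altX X + D < n)%N -> ~~ P (moment_signs n x).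
Proof.
move=> x_neq0 small; apply/negP => Px.
by have := leq_bigmax_cond (F := @altX n) _ Px; have := altX_moment_signs n x_neq0; lia.
Qed.

Section Embedding.
Variables (R : realType) (V : finType) (n D : nat) (sigma : 'I_n -> V) (g : V -> 'I_n).
Hypotheses (sigmaK : cancel sigma g) (gK : cancel g sigma).

Definition moment_embedding (v : V) : 'rV[R]_D.+1 := normalize (moment_vector D.+1 (g v)).

Lemma on_sphere_moment_embedding v : on_sphere (moment_embedding v).
Proof. exact/on_sphere_normalize/moment_vector_neq0. Qed.

Lemma moment_embedding_inj : (1 <= D)%N -> injective moment_embedding.
Proof.
by move=> D_ge1 u v /(@normalize_moment_vector_inj R D.+1 D_ge1) /val_inj /(can_inj gK).
Qed.

Lemma mem_imset_Xplus x v :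
  (v \in sigma @: Xplus (moment_signs n x)) = (0 < dotp x (moment_embedding v)).
Proof.
rewrite (can2_imset_pre _ sigmaK gK) !inE ffunE sign_of_eq_pos.
by rewrite dotp_normalize_gt0 ?moment_vector_neq0.
Qed.

Lemma mem_imset_Xminus x v :
  (v \in sigma @: Xminus (moment_signs n x)) = (0 < dotp (- x) (moment_embedding v)).
Proof.
rewrite (can2_imset_pre _ sigmaK gK) !inE ffunE sign_of_eq_neg.
by rewrite dotp_normalize_gt0 ?moment_vector_neq0 // dotpNl oppr_gt0.
Qed.

End Embedding.

Theorem corollary1 (R : realType) (V : finType) (E : {set {set V}}) (n : nat)
  (sigma : 'I_n -> V)
  (V_nonempty : (0 < #|V|)%N)
  (E_nonempty_edges : forall e, e \in E -> e != set0)
  (sigma_bij : bijective sigma) :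
  (* (a) *)
  (alt_hyp E sigma <> #|V| ->
   let d := (#|V| - alt_hyp E sigma - 1)%N in
   exists phi : V -> 'rV[R]_(d.+1),
     (forall v, on_sphere (phi v)) /\
     (forall x : 'rV[R]_(d.+1), on_sphere x ->
        exists2 e, e \in E &
          ((forall v, v \in e -> in_hemisphere x (phi v)) \/
           (forall v, v \in e -> in_hemisphere (- x) (phi v)))) /\
     ((1 <= d)%N -> injective phi))
  /\
  (* (b) *)
  (salt_hyp E sigma <> #|V| ->
   let d := (#|V| - salt_hyp E sigma - 1)%N in
   exists phi : V -> 'rV[R]_(d.+1),
     (forall v, on_sphere (phi v)) /\
     (forall x : 'rV[R]_(d.+1), on_sphere x ->
        exists2 e, e \in E &
          (forall v, v \in e -> in_hemisphere x (phi v))) /\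
     ((1 <= d)%N -> injective phi)).
Proof.
have [g sigmaK gK] := sigma_bij.
have card_V : #|V| = n by rewrite -(bij_eq_card sigma_bij) card_ord.
have room (P : pred (signvec n)) : \max_(X | P X) altX X <> #|V| ->
    (\max_(X | P X) altX X + (#|V| - \max_(X | P X) altX X - 1) < n)%N.
  by have := bigmax_altX_le P; rewrite card_V; lia.
split=> [alt_neq d | salt_neq d]; exists (moment_embedding R d g).
all: split; [exact: on_sphere_moment_embedding | split; last exact: moment_embedding_inj].
- move=> x /on_sphere_neq0 /moment_signs_excluded /(_ (room _ alt_neq)).
  rewrite -leqn0 geq_max !leqn0 negb_and => /orP [] /induced_edge_exists [e eE /subsetP sub_e].
  + by exists e => //; left => v /sub_e; rewrite (mem_imset_Xplus sigmaK gK).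
  + by exists e => //; right => v /sub_e; rewrite (mem_imset_Xminus sigmaK gK).
- move=> x /on_sphere_neq0 /moment_signs_excluded /(_ (room _ salt_neq)).
  rewrite -leqn0 geq_min !leqn0 negb_or => /andP [+ _].
  move=> /induced_edge_exists [e eE /subsetP sub_e].
  by exists e => // v /sub_e; rewrite (mem_imset_Xplus sigmaK gK).
Qed.
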